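(* Let $P$ be a CHR program that is range-restricted and ground confluent. Then $P$ is consistent: the first-order theory consisting of $\mathcal{CT}$ together with the logical reading of $P$ has a model (in particular, it does not imply $\mathtt{False}$).
   Context: Terms are variables or $F~t_1\ldots t_n$ for function symbols $F$. Built-in constraints are $\mathtt{True}$, $\mathtt{False}$ and $t=s$; user constraints are $C~t_1\ldots t_n$ for user predicate symbols $C$; constraints are built-in or user constraints. $\mathcal{CT}$ is the theory of syntactic equality of terms. There are three disjoint infinite sets of variables $\mathsf{ProgVars}$, $\mathsf{GlobalVars}$, $\mathsf{LocalVars}$; let $\mathsf{StateVars}=\mathsf{GlobalVars}\cup\mathsf{LocalVars}$. A CHR program is a finite set of rules, each a simplification $H \Leftrightarrow B$ or a propagation $H \Rightarrow B$, where $H$ is a nonempty multiset of user constraints over $\mathsf{ProgVars}$ and $B$ a multiset of constraints over $\mathsf{ProgVars}$; the local variables of a rule are those in $B$ but not in $H$. The logical reading of a simplification is $\forall(\bigwedge H \leftrightarrow \exists \bar y\, \bigwedge B)$ and of a propagation $\forall(\bigwedge H \rightarrow \exists \bar y\, \bigwedge B)$, where $\bar y$ are the local variables; the logical reading of $P$ is the conjunction of these. A state is a multiset of constraints over $\mathsf{StateVars}$, taken modulo the equivalence $S_1\equiv S_2$ iff $\mathcal{CT}\models (\exists_{\mathsf{LocalVars}}: \mathrm{user}(S_1)=\mathrm{user}(S_2)\wedge S_1)\leftrightarrow(\exists_{\mathsf{LocalVars}}: \mathrm{user}(S_1)=\mathrm{user}(S_2)\wedge S_2)$, where $\mathrm{user}(S)$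 is the multiset of user constraints of $S$; $\mathtt{False}$ denotes the state $\{\mathtt{False}\}$ and $\mathtt{True}$ the state $\{\mathtt{True}\}$. For a substitution $\theta$ and object $X$, $\theta.X$ is $\theta$ applied to $X$; $\uplus$ is multiset union. The derivation relation $\rightarrowtail$ of $P$ is the least relation with: (simplification) if $(H\Leftrightarrow B)\in P$, $\mathcal{CT}\models S\rightarrow(\theta.H=C)$ and $\mathcal{CT}\models\exists(C\wedge S)$, then $C\uplus S\rightarrowtail \theta.B\uplus S$; (propagation) if $(H\Rightarrow B)\in P$, $\mathcal{CT}\models S\rightarrow(\theta.H=C)$, $\mathcal{CT}\models\exists(C\wedge S)$ and $C\uplus S\neq \theta.B\uplus C\uplus S$ as states, then $C\uplus S\rightarrowtail \theta.B\uplus C\uplus S$; here $\theta$ maps the variables of $H$ to terms over the variables of $C$ and the local variables of the rule to fresh variables of $\mathsf{LocalVars}$ not occurring in $C,S$. $\rightarrowtail^*$ is the reflexive–transitive closure. Two states $S_1,S_2$ are joinable if $S_1\rightarrowtail^* S'$ and $S_2\rightarrowtail^* S'$ for some $S'$. A state is ground if it is represented by a multiset of constraints containing no variables. $P$ is range-restricted if whenever $S$ is ground and $S\rightarrowtail S'$, then $S'$ is ground. $P$ is ground confluent if for every ground state $S$ and all $S_1,S_2$ with $S\rightarrowtail^* S_1$, $S\rightarrowtail^* S_2$, the states $S_1,S_2$ are joinable. *)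

From Stdlib Require Import List Permutation Relations.
Import ListNotations.
Set Implicit Arguments.

Inductive var : Type :=
| PV (n : nat)
| GV (n : nat)
| LV (n : nat).

Definition is_prog_var (x : var) : Prop := match x with PV _ => True | _ => False end.
Definition is_local_var (x : var) : Prop := match x with LV _ => True | _ => False end.

Section CHR.
(* Fsym : function symbols, Psym : user predicate (constraint) symbols.
   Symbols carry no fixed arity: F t1 .. tn may be formed for any n. *)
Variables Fsym Psym : Type.

Inductive term : Type :=
| Var (x : var)
| Fn (f : Fsym) (args : list term).

Inductive constraint : Type :=
| CTrue
| CFalse
| CEq (t s : term)
| CUser (c : Psym) (args : list term).

Fixpoint tvars (t : term) : list var :=
  match t with
  | Var x => [x]
  | Fn _ ts => flat_map tvars ts
  end.

Definition cvars (c : constraint) : list var :=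
  match c with
  | CTrue | CFalse => []
  | CEq t s => tvars t ++ tvars s
  | CUser _ ts => flat_map tvars ts
  end.

(* A multiset of constraints is represented by a list (up to permutation). *)
Definition svars (S : list constraint) : list var := flat_map cvars S.

Definition user (S : list constraint) : list constraint :=
  filter (fun c => match c with CUser _ _ => true | _ => false end) S.

Record structure : Type := {
  dom   : Type;
  ifun  : Fsym -> list dom -> dom;
  ipred : Psym -> list dom -> Prop }.

Fixpoint eval (M : structure) (v : var -> dom M) (t : term) : dom M :=
  match t with
  | Var x => v x
  | Fn f ts => ifun M f (map (eval M v) ts)
  end.

(* CT: Clark's equality theory (syntactic equality of terms): equality is
   interpreted as identity; decomposition/injectivity, clash (distinct symbols
   or distinct numbers of arguments give distinct values) and acyclicity. *)
Definition CT_model (M : structure) : Prop :=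
  (forall f g (l1 l2 : list (dom M)), ifun M f l1 = ifun M g l2 -> f = g /\ l1 = l2) /\
  (forall (t : term) (x : var) (v : var -> dom M),
      In x (tvars t) -> t <> Var x -> eval M v t <> v x).

(* Built-in part of a state evaluated in a structure; in CT-formulas user
   constraints carry no information from CT. *)
Definition holds_builtin (M : structure) (v : var -> dom M) (c : constraint) : Prop :=
  match c with
  | CTrue => True
  | CFalse => False
  | CEq t s => eval M v t = eval M v s
  | CUser _ _ => True
  end.

Definition holds_b (M : structure) (v : var -> dom M) (S : list constraint) : Prop :=
  Forall (holds_builtin M v) S.

Definition ceq (M : structure) (v w : var -> dom M) (c d : constraint) : Prop :=
  match c, d with
  | CUser p a, CUser q b => p = q /\ map (eval M v) a = map (eval M w) b
  | _, _ => False
  end.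

Definition ueq (M : structure) (v w : var -> dom M) (l1 l2 : list constraint) : Prop :=
  exists l2', Permutation l2 l2' /\ Forall2 (ceq M v w) l1 l2'.

Definition is_state (S : list constraint) : Prop :=
  forall x, In x (svars S) -> ~ is_prog_var x.

(* State equivalence: local variables of each state are existentially
   quantified (separately), global variables are shared. *)
Definition equiv_dir (S1 S2 : list constraint) : Prop :=
  forall M : structure, CT_model M ->
  forall v : var -> dom M, holds_b M v S1 ->
    exists v' : var -> dom M,
      (forall x, ~ is_local_var x -> v' x = v x) /\
      ueq M v v' (user S1) (user S2) /\ holds_b M v' S2.

Definition state_equiv (S1 S2 : list constraint) : Prop :=
  equiv_dir S1 S2 /\ equiv_dir S2 S1.

Definition ground (S : list constraint) : Prop :=
  exists G, svars G = [] /\ state_equiv S G.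

Inductive rule_kind := Simplification | Propagation.

Record rule : Type := {
  kind : rule_kind;
  head : list (Psym * list term);
  body : list constraint }.

Definition program := list rule.

Definition head_constraints (r : rule) : list constraint :=
  map (fun a => CUser (fst a) (snd a)) (head r).

Definition head_vars (r : rule) : list var := svars (head_constraints r).

Definition local_vars (r : rule) : list var :=
  filter (fun x => negb (existsb (fun y =>
            match x, y with
            | PV n, PV m | GV n, GV m | LV n, LV m => Nat.eqb n m
            | _, _ => false end) (head_vars r))) (svars (body r)).

Definition wf_rule (r : rule) : Prop :=
  head r <> [] /\
  (forall x, In x (head_vars r) -> is_prog_var x) /\
  (forall x, In x (svars (body r)) -> is_prog_var x).

Definition wf_program (P : program) : Prop := Forall wf_rule P.

Fixpoint subst (th : var -> term) (t : term) : term :=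
  match t with
  | Var x => th x
  | Fn f ts => Fn f (map (subst th) ts)
  end.

Definition csubst (th : var -> term) (c : constraint) : constraint :=
  match c with
  | CTrue => CTrue
  | CFalse => CFalse
  | CEq t s => CEq (subst th t) (subst th s)
  | CUser p ts => CUser p (map (subst th) ts)
  end.

Definition ssubst (th : var -> term) (S : list constraint) := map (csubst th) S.

(* One derivation step on representatives: C ++ S >-> th.B ++ S (resp.
   th.B ++ C ++ S). *)
Definition raw_step (P : program) (S1 S2 : list constraint) : Prop :=
  exists (r : rule) (C S : list constraint) (th : var -> term),
    In r P /\ S1 = C ++ S /\ is_state S1 /\
    (forall x, In x (head_vars r) -> incl (tvars (th x)) (svars C)) /\
    (forall y, In y (local_vars r) ->
        exists z, is_local_var z /\ th y = Var z /\ ~ In z (svars (C ++ S))) /\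
    (forall y1 y2, In y1 (local_vars r) -> In y2 (local_vars r) ->
        th y1 = th y2 -> y1 = y2) /\
    (forall M : structure, CT_model M -> forall v : var -> dom M,
        holds_b M v S -> ueq M v v (ssubst th (head_constraints r)) C) /\
    (forall M : structure, CT_model M -> exists v : var -> dom M, holds_b M v (C ++ S)) /\
    match kind r with
    | Simplification => S2 = ssubst th (body r) ++ S
    | Propagation => S2 = ssubst th (body r) ++ C ++ S /\
                     ~ state_equiv (C ++ S) (ssubst th (body r) ++ C ++ S)
    end.

(* Derivation relation on states (equivalence classes). *)
Definition step (P : program) (S1 S2 : list constraint) : Prop :=
  exists R1 R2, state_equiv S1 R1 /\ state_equiv S2 R2 /\ raw_step P R1 R2.

Definition star (P : program) : list constraint -> list constraint -> Prop :=
  clos_refl_trans (list constraint) (fun a b => state_equiv a b \/ step P a b).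

Definition joinable (P : program) (S1 S2 : list constraint) : Prop :=
  exists S', star P S1 S' /\ star P S2 S'.

Definition range_restricted (P : program) : Prop :=
  forall S S', ground S -> step P S S' -> ground S'.

Definition ground_confluent (P : program) : Prop :=
  forall S S1 S2, ground S -> star P S S1 -> star P S S2 -> joinable P S1 S2.

Definition holds_c (M : structure) (v : var -> dom M) (c : constraint) : Prop :=
  match c with
  | CTrue => True
  | CFalse => False
  | CEq t s => eval M v t = eval M v s
  | CUser p ts => ipred M p (map (eval M v) ts)
  end.

Definition rule_holds (M : structure) (r : rule) : Prop :=
  forall v : var -> dom M,
    let H := Forall (holds_c M v) (head_constraints r) in
    let B := exists v' : var -> dom M,
               (forall x, ~ In x (local_vars r) -> v' x = v x) /\
               Forall (holds_c M v') (body r) in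
    match kind r with
    | Simplification => H <-> B
    | Propagation => H -> B
    end.

Definition consistent (P : program) : Prop :=
  exists M : structure, CT_model M /\ Forall (rule_holds M) P.

End CHR.

(* Work in the Herbrand structure of ground terms, a model of CT whatever the interpretation
   of the user predicates.  By Zorn's lemma choose a maximal set I of ground atoms no finite
   multiset of which is joinable with False; the empty multiset qualifies since no rule fires
   on the empty state.  Firing a rule on a ground instance of its head yields, by range
   restriction, a ground state equivalent to a multiset of atoms.  If these atoms were not all
   in I, or the built-ins of that state failed, maximality would make the head atoms
   refutable; so true heads give true bodies.  Conversely, for a simplification rule with a
   true body, ground confluence transports refutability from the head to the body, so
   maximality puts the head atoms in I.  Hence the Herbrand structure over I models the
   logical reading of P. *)

From Pilot Require Import Defs.
From Stdlib Require Import List Permutation Relations Lia Classical.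
From Stdlib Require Import FunctionalExtensionality PropExtensionality.
From mathcomp Require classical_sets.
Import ListNotations.

Arguments Var {Fsym} x.
Arguments CFalse {Fsym Psym}.

Lemma zorn_chain_union (T : Type) (Q : (T -> Prop) -> Prop) :
  (forall F : (T -> Prop) -> Prop, (forall X, F X -> Q X) ->
     (forall X Y, F X -> F Y -> (forall t, X t -> Y t) \/ (forall t, Y t -> X t)) ->
     Q (fun t => exists X, F X /\ X t)) ->
  exists A, Q A /\ forall B, (forall t, A t -> B t) -> Q B -> forall t, B t -> A t.
Proof.
  intros Hchain.
  destruct (classical_sets.Zorn_bigcup (T:=T) (P:=Q)) as [A [QA Amax]].
  - intros F FQ Ftotal.
    replace (classical_sets.bigcup F (fun X => X)) with (fun t => exists X, F X /\ X t).
    + apply Hchain; [exact FQ|]. intros X Y FX FY. exact (Ftotal X Y FX FY).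
    + apply functional_extensionality. intros t. apply propositional_extensionality.
      split; [intros [X [FX Xt]]; exists X; assumption | intros [X FX Xt]; eauto].
  - exists A. split; [exact QA|]. intros B AB QB t Bt.
    apply NNPP. intros nAt. apply (Amax B); [|exact QB].
    split; [exact AB|]. intros BA. exact (nAt (BA t Bt)).
Qed.

Lemma Forall_chain_union (T : Type) (F : (T -> Prop) -> Prop) (l : list T) :
  (forall X Y, F X -> F Y -> (forall t, X t -> Y t) \/ (forall t, Y t -> X t)) ->
  Forall (fun t => exists X, F X /\ X t) l -> l = [] \/ exists X, F X /\ Forall X l.
Proof.
  intros Hchain. induction 1 as [|a l [X [FX Xa]] _ [->|[Y [FY HY]]]]; [left; reflexivity| |].
  - right. exists X. split; [exact FX|constructor; [exact Xa|constructor]].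
  - right. destruct (Hchain X Y FX FY) as [XY|YX].
    + exists Y. split; [exact FY|constructor; [apply XY, Xa|exact HY]].
    + exists X. split; [exact FX|constructor; [exact Xa|exact (Forall_impl _ YX HY)]].
Qed.

Section Consistency.
Variables Fsym Psym : Type.

Notation term := (term Fsym).
Notation constraint := (constraint Fsym Psym).
Notation structure := (structure Fsym Psym).
Notation program := (program Fsym Psym).
Notation rule := (rule Fsym Psym).

Fixpoint term_ind_nested (Q : term -> Prop) (HV : forall x, Q (Var x))
  (HFn : forall f ts, Forall Q ts -> Q (Fn f ts)) (t : term) : Q t :=
  match t with
  | Var x => HV x
  | Fn f ts => HFn f ts ((fix args l := match l return Forall Q l with
       | [] => Forall_nil _
       | u :: l' => Forall_cons _ (term_ind_nested Q HV HFn u) (args l') end) ts)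
  end.

Lemma eval_ext (M : structure) (v w : var -> dom M) (t : term) :
  (forall x, In x (tvars t) -> v x = w x) -> eval M v t = eval M w t.
Proof.
  induction t as [x|f ts IH] using term_ind_nested; intros Hvw; simpl.
  - apply Hvw. left. reflexivity.
  - f_equal. apply map_ext_in. intros t Ht. rewrite Forall_forall in IH.
    apply IH; [exact Ht|]. intros x Hx. apply Hvw. apply in_flat_map. eauto.
Qed.

Lemma eval_subst (M : structure) (w : var -> dom M) (th : var -> term) (t : term) :
  eval M w (subst th t) = eval M (fun x => eval M w (th x)) t.
Proof.
  induction t as [x|f ts IH] using term_ind_nested; simpl; [reflexivity|].
  f_equal. rewrite map_map. apply map_ext_in. intros t Ht. rewrite Forall_forall in IH. auto.
Qed.

Lemma holds_c_csubst (M : structure) (w : var -> dom M) (th : var -> term) (c : constraint) :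
  holds_c M w (csubst th c) <-> holds_c M (fun x => eval M w (th x)) c.
Proof.
  destruct c; simpl; rewrite ?eval_subst; [tauto|tauto|tauto|].
  rewrite map_map. erewrite map_ext; [reflexivity|]. intros t. apply eval_subst.
Qed.

Lemma holds_c_ext (M : structure) (v w : var -> dom M) (c : constraint) :
  (forall x, In x (cvars c) -> v x = w x) -> holds_c M v c <-> holds_c M w c.
Proof.
  intros Hvw. destruct c as [| |t s|p ts]; simpl in *; [tauto|tauto| |].
  - rewrite (eval_ext M v w t), (eval_ext M v w s); [reflexivity| |];
      intros x Hx; apply Hvw, in_or_app; auto.
  - erewrite map_ext_in; [reflexivity|]. intros t Ht. apply eval_ext.
    intros x Hx. apply Hvw, in_flat_map. eauto.
Qed.

Inductive gterm : Type := gnode : Fsym -> list gterm -> gterm.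

Fixpoint gterm_ind_nested (Q : gterm -> Prop)
  (HN : forall f l, Forall Q l -> Q (gnode f l)) (a : gterm) : Q a :=
  match a with
  | gnode f l => HN f l ((fix args l := match l return Forall Q l with
       | [] => Forall_nil _
       | u :: l' => Forall_cons _ (gterm_ind_nested Q HN u) (args l') end) l)
  end.

Fixpoint gsize (a : gterm) : nat :=
  match a with gnode _ l => S (list_sum (map gsize l)) end.

Lemma gsize_arg a f l : In a l -> gsize a < gsize (gnode f l).
Proof.
  simpl. induction l as [|b l IH]; simpl; [tauto|].
  intros [->|Hin]; [lia|]. specialize (IH Hin). lia.
Qed.

Definition gatom : Type := Psym * list gterm.

Definition herbrand (I : gatom -> Prop) : structure :=
  {| dom := gterm; ifun := gnode; ipred := fun p l => I (p, l) |}.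

(* The interpretation is irrelevant here, see [eval_herbrand]. *)
Definition geval (v : var -> gterm) : term -> gterm := eval (herbrand (fun _ => True)) v.

Lemma geval_Fn v f ts : geval v (Fn f ts) = gnode f (map (geval v) ts).
Proof. reflexivity. Qed.

Lemma eval_herbrand I v t : eval (herbrand I) v t = geval v t.
Proof.
  induction t as [x|f ts IH] using term_ind_nested; [reflexivity|].
  unfold geval. simpl. f_equal. apply map_ext_in. intros t Ht. rewrite Forall_forall in IH. auto.
Qed.

Lemma gsize_geval_lt v x t : In x (tvars t) -> t <> Var x -> gsize (v x) < gsize (geval v t).
Proof.
  induction t as [y|f ts IH] using term_ind_nested; intros Hin Hne; simpl in Hin.
  - destruct Hin as [->|[]]. contradiction.
  - apply in_flat_map in Hin as [t [Ht Hx]].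
    pose proof (gsize_arg (geval v t) f (map (geval v) ts) (in_map _ _ _ Ht)) as Hlt.
    rewrite geval_Fn.
    rewrite Forall_forall in IH. destruct (classic (t = Var x)) as [->|Hne0]; [exact Hlt|].
    specialize (IH t Ht Hx Hne0). lia.
Qed.

Lemma herbrand_CT I : CT_model (herbrand I).
Proof.
  split.
  - intros f g l1 l2 E. simpl in E. injection E. auto.
  - intros t x v Hin Hne E. rewrite eval_herbrand in E.
    pose proof (gsize_geval_lt v x t Hin Hne) as Hlt. rewrite E in Hlt. lia.
Qed.

Fixpoint of_gterm (a : gterm) : term :=
  match a with gnode f l => Fn f (map of_gterm l) end.

Fixpoint gterm_interp (M : structure) (a : gterm) : dom M :=
  match a with gnode f l => ifun M f (map (gterm_interp M) l) end.

Lemma tvars_of_gterm a : tvars (of_gterm a) = [].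
Proof.
  induction a as [f l IH] using gterm_ind_nested. simpl.
  induction IH as [|b l Hb _ IHl]; simpl; [reflexivity|]. rewrite Hb. exact IHl.
Qed.

Lemma eval_of_gterm (M : structure) (v : var -> dom M) a : eval M v (of_gterm a) = gterm_interp M a.
Proof.
  induction a as [f l IH] using gterm_ind_nested. simpl. f_equal.
  rewrite map_map. apply map_ext_in. intros b Hb. rewrite Forall_forall in IH. auto.
Qed.

Lemma geval_of_gterm v a : geval v (of_gterm a) = a.
Proof.
  unfold geval. rewrite eval_of_gterm.
  induction a as [f l IH] using gterm_ind_nested. simpl. f_equal.
  rewrite <- (map_id l) at 2. apply map_ext_in. intros b Hb. rewrite Forall_forall in IH. auto.
Qed.

Lemma eval_closed (M : structure) (w : var -> dom M) (u : var -> gterm) t :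
  tvars t = [] -> eval M w t = gterm_interp M (geval u t).
Proof.
  induction t as [x|f ts IH] using term_ind_nested; intros Hts; [discriminate|].
  rewrite geval_Fn. simpl. f_equal. rewrite map_map.
  apply map_ext_in. intros t Ht. rewrite Forall_forall in IH. apply IH; [exact Ht|].
  apply incl_l_nil. rewrite <- Hts. intros x Hx. apply in_flat_map. eauto.
Qed.

Lemma gterm_interp_inj (M : structure) a b :
  CT_model M -> gterm_interp M a = gterm_interp M b -> a = b.
Proof.
  intros [Hinj _]. revert b.
  induction a as [f l IH] using gterm_ind_nested. intros [g l'] E. simpl in E.
  apply Hinj in E as [-> E]. f_equal. revert l' E.
  induction IH as [|a l Ha _ IHl]; intros [|b l'] E; try discriminate; [reflexivity|].
  injection E as Eab El. f_equal; auto.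
Qed.

Lemma subst_of_gterm (th : var -> term) (v : var -> gterm) (t : term) :
  (forall x, In x (tvars t) -> th x = of_gterm (v x)) -> subst th t = of_gterm (geval v t).
Proof.
  induction t as [x|f ts IH] using term_ind_nested; intros Hth.
  - apply Hth. left. reflexivity.
  - rewrite geval_Fn. simpl. f_equal. rewrite map_map.
    apply map_ext_in. intros t Ht. rewrite Forall_forall in IH.
    apply IH; [exact Ht|]. intros x Hx. apply Hth. apply in_flat_map. eauto.
Qed.

Definition atom (a : gatom) : constraint := CUser (fst a) (map of_gterm (snd a)).

Lemma svars_app (S1 S2 : list constraint) : svars (S1 ++ S2) = svars S1 ++ svars S2.
Proof. apply flat_map_app. Qed.

Lemma user_app (S1 S2 : list constraint) : user (S1 ++ S2) = user S1 ++ user S2.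
Proof. apply filter_app. Qed.

Lemma holds_b_app (M : structure) v (S1 S2 : list constraint) :
  holds_b M v (S1 ++ S2) <-> holds_b M v S1 /\ holds_b M v S2.
Proof. apply Forall_app. Qed.

Lemma svars_map_atom (l : list gatom) : svars (map atom l) = [].
Proof.
  induction l as [|[p ts] l IH]; [reflexivity|]. unfold svars in *. simpl. rewrite IH, app_nil_r.
  induction ts as [|a ts IHts]; simpl; [reflexivity|]. rewrite tvars_of_gterm. exact IHts.
Qed.

Lemma user_map_atom (l : list gatom) : user (map atom l) = map atom l.
Proof. induction l as [|a l IH]; simpl; [reflexivity|]. f_equal. exact IH. Qed.

Lemma holds_b_map_atom (M : structure) v (l : list gatom) : holds_b M v (map atom l).
Proof. apply Forall_map, Forall_forall. intros. exact I. Qed.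

Lemma ceq_map_atom (M : structure) v w (l : list gatom) :
  Forall2 (ceq M v w) (map atom l) (map atom l).
Proof.
  induction l as [|a l IH]; constructor; [|exact IH].
  split; [reflexivity|]. rewrite !map_map. apply map_ext. intros b.
  rewrite !eval_of_gterm. reflexivity.
Qed.

Lemma ueq_user_refl (M : structure) v (S : list constraint) : ueq M v v (user S) (user S).
Proof.
  exists (user S). split; [apply Permutation_refl|].
  induction S as [|[] S IH]; simpl; auto. constructor; [split|]; auto.
Qed.

Lemma ueq_app_map_atom (M : structure) v w (U1 U2 : list constraint) (l : list gatom) :
  ueq M v w U1 U2 -> ueq M v w (U1 ++ map atom l) (U2 ++ map atom l).
Proof.
  intros [U2' [Hp Hf]]. exists (U2' ++ map atom l). split.
  - apply Permutation_app_tail. exact Hp.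
  - apply Forall2_app; [exact Hf|apply ceq_map_atom].
Qed.

Lemma state_equiv_refl (S : list constraint) : state_equiv S S.
Proof.
  assert (D : equiv_dir S S).
  { intros M _ v Hv. exists v. split; [reflexivity|]. split; [apply ueq_user_refl|exact Hv]. }
  split; exact D.
Qed.

Lemma state_equiv_sym (S1 S2 : list constraint) : state_equiv S1 S2 -> state_equiv S2 S1.
Proof. intros [D1 D2]. split; assumption. Qed.

Lemma state_equiv_app_map_atom (S1 S2 : list constraint) (l : list gatom) :
  state_equiv S1 S2 -> state_equiv (S1 ++ map atom l) (S2 ++ map atom l).
Proof.
  assert (D : forall T1 T2, equiv_dir T1 T2 -> equiv_dir (T1 ++ map atom l) (T2 ++ map atom l)).
  { intros T1 T2 D M HM v Hv. apply holds_b_app in Hv as [Hv _].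
    destruct (D M HM v Hv) as [v' [Hloc [Hu Hh]]]. exists v'. split; [exact Hloc|]. split.
    - rewrite !user_app, user_map_atom. apply ueq_app_map_atom. exact Hu.
    - apply holds_b_app. split; [exact Hh|apply holds_b_map_atom]. }
  intros [D1 D2]. split; apply D; assumption.
Qed.

Lemma state_equiv_perm_map_atom (l l' : list gatom) :
  Permutation l l' -> state_equiv (map atom l) (map atom l').
Proof.
  assert (D : forall l1 l2, Permutation l1 l2 -> equiv_dir (map atom l1) (map atom l2)).
  { intros l1 l2 Hp M _ v _. exists v. split; [reflexivity|]. split; [|apply holds_b_map_atom].
    rewrite !user_map_atom. exists (map atom l1).
    split; [apply Permutation_map, Permutation_sym, Hp|apply ceq_map_atom]. }
  intros Hp. split; apply D; [exact Hp|apply Permutation_sym, Hp].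
Qed.

Lemma state_equiv_false_cons (S : list constraint) :
  state_equiv [CFalse : constraint] (CFalse :: S).
Proof. split; intros M _ v Hv; inversion Hv as [|? ? Hf]; destruct Hf. Qed.

Lemma raw_step_app_map_atom (P : program) (R1 R2 : list constraint) (l : list gatom) :
  raw_step P R1 R2 ->
  raw_step P (R1 ++ map atom l) (R2 ++ map atom l) \/
  state_equiv (R1 ++ map atom l) (R2 ++ map atom l).
Proof.
  intros [r [C [S [th [Hin [-> [Hst [Hhd [Hloc [Hinj [Hmatch [Hsat Hk]]]]]]]]]]]].
  assert (Esv : svars (C ++ S ++ map atom l) = svars (C ++ S)).
  { rewrite app_assoc, svars_app, svars_map_atom, app_nil_r. reflexivity. }
  assert (Hst' : is_state (C ++ S ++ map atom l)) by (intros x; rewrite Esv; apply Hst).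
  assert (Hloc' : forall y, In y (local_vars r) ->
      exists z, is_local_var z /\ th y = Var z /\ ~ In z (svars (C ++ S ++ map atom l)))
    by (rewrite Esv; exact Hloc).
  assert (Hmatch' : forall M : structure, CT_model M -> forall v : var -> dom M,
      holds_b M v (S ++ map atom l) -> ueq M v v (ssubst th (head_constraints r)) C).
  { intros M HM v Hv. apply holds_b_app in Hv as [Hv _]. exact (Hmatch M HM v Hv). }
  assert (Hsat' : forall M : structure, CT_model M ->
      exists v : var -> dom M, holds_b M v (C ++ S ++ map atom l)).
  { intros M HM. destruct (Hsat M HM) as [v Hv]. exists v.
    rewrite app_assoc. apply holds_b_app. split; [exact Hv|apply holds_b_map_atom]. }
  destruct (kind r) eqn:Ek.
  - left. exists r, C, (S ++ map atom l), th. rewrite Ek, Hk, <- !app_assoc.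
    repeat split; assumption.
  - destruct Hk as [-> Hne]. rewrite <- !app_assoc.
    destruct (classic (state_equiv (C ++ S ++ map atom l)
                         (ssubst th (body r) ++ C ++ S ++ map atom l))) as [Heq|Hne'].
    + right. exact Heq.
    + left. exists r, C, (S ++ map atom l), th. rewrite Ek. repeat split; assumption.
Qed.

Lemma star_app_map_atom (P : program) (S1 S2 : list constraint) (l : list gatom) :
  star P S1 S2 -> star P (S1 ++ map atom l) (S2 ++ map atom l).
Proof.
  induction 1 as [S1 S2 [He|[R1 [R2 [E1 [E2 Hr]]]]]| |];
    [| |apply rt_refl|eapply rt_trans; eassumption].
  - apply rt_step. left. apply state_equiv_app_map_atom. exact He.
  - apply rt_trans with (R1 ++ map atom l).
    { apply rt_step. left. apply state_equiv_app_map_atom, E1. }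
    apply rt_trans with (R2 ++ map atom l).
    + apply rt_step. destruct (raw_step_app_map_atom P R1 R2 l Hr) as [H|H]; [right|left; exact H].
      exists (R1 ++ map atom l), (R2 ++ map atom l). auto using state_equiv_refl.
    + apply rt_step. left. apply state_equiv_sym, state_equiv_app_map_atom, E2.
Qed.

Definition refutable (P : program) (l : list gatom) : Prop := joinable P (map atom l) [CFalse].

Lemma refutable_app (P : program) (l l' : list gatom) : refutable P l -> refutable P (l ++ l').
Proof.
  intros [X [H1 H2]]. exists (X ++ map atom l'). split.
  - rewrite map_app. apply star_app_map_atom. exact H1.
  - apply rt_trans with ([CFalse] ++ map atom l').
    + apply rt_step. left. apply state_equiv_false_cons.
    + apply star_app_map_atom. exact H2.
Qed.

Lemma refutable_perm (P : program) (l l' : list gatom) :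
  Permutation l l' -> refutable P l -> refutable P l'.
Proof.
  intros Hp [X [H1 H2]]. exists X. split; [|exact H2].
  apply rt_trans with (map atom l); [|exact H1].
  apply rt_step. left. apply state_equiv_perm_map_atom, Permutation_sym, Hp.
Qed.

Lemma refutable_of_star (P : program) (w u l : list gatom) :
  star P (map atom w) (map atom u) -> refutable P (u ++ l) -> refutable P (w ++ l).
Proof.
  intros Hs [X [H1 H2]]. exists X. split; [|exact H2].
  rewrite map_app in *. eapply rt_trans; [apply star_app_map_atom, Hs|exact H1].
Qed.

Lemma refutable_star (P : program) (w u l : list gatom) : ground_confluent P ->
  star P (map atom w) (map atom u) -> refutable P (w ++ l) -> refutable P (u ++ l).
Proof.
  intros GC Hs [X [H1 H2]]. rewrite map_app in *.
  assert (Gr : ground (map atom w ++ map atom l)).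
  { exists (map atom w ++ map atom l). rewrite <- map_app, svars_map_atom.
    split; [reflexivity|apply state_equiv_refl]. }
  destruct (GC _ _ _ Gr (star_app_map_atom P _ _ l Hs) H1) as [Y [Y1 Y2]].
  exists Y. rewrite map_app. split; [exact Y1|eapply rt_trans; eassumption].
Qed.

Lemma star_invariant (P : program) (Q : list constraint -> Prop) :
  (forall X Y, Q X -> state_equiv X Y \/ step P X Y -> Q Y) ->
  forall X Y, star P X Y -> Q X -> Q Y.
Proof. intros Hinv X Y Hs. induction Hs; eauto. Qed.

Lemma raw_step_user (P : program) (R1 R2 : list constraint) :
  wf_program P -> raw_step P R1 R2 -> user R1 <> [].
Proof.
  intros Hwf [r [C [S [th [Hin [-> [_ [_ [_ [_ [Hmatch [Hsat _]]]]]]]]]]]] Hu.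
  destruct (Hsat _ (herbrand_CT (fun _ => True))) as [v Hv]. apply holds_b_app in Hv as [_ Hv].
  destruct (Hmatch _ (herbrand_CT (fun _ => True)) v Hv) as [C' [Hp Hf]].
  unfold wf_program in Hwf. rewrite Forall_forall in Hwf. destruct (Hwf r Hin) as [Hne _].
  unfold ssubst, head_constraints in Hf. destruct (Defs.head r) as [|[p ts] hs]; [contradiction|].
  inversion Hf as [|? [| | |q args] ? ? Hce _]; subst; try contradiction.
  assert (Hc : In (CUser q args) (user C)).
  { apply filter_In. split; [|reflexivity].
    apply (Permutation_in _ (Permutation_sym Hp)). left. reflexivity. }
  rewrite user_app in Hu. apply app_eq_nil in Hu as [Hu _]. rewrite Hu in Hc. destruct Hc.
Qed.

Lemma state_equiv_satisfiable_no_user (M : structure) (X Y : list constraint) : CT_model M ->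
  (exists v, holds_b M v X) /\ user X = [] -> state_equiv X Y ->
  (exists v, holds_b M v Y) /\ user Y = [].
Proof.
  intros HM [[v Hv] Hu] [D _]. destruct (D M HM v Hv) as [v' [_ [[U [Hp Hf]] Hh]]].
  split; [exists v'; exact Hh|]. rewrite Hu in Hf. inversion Hf; subst.
  apply Permutation_nil, Permutation_sym, Hp.
Qed.

Lemma state_equiv_unsatisfiable (M : structure) (X Y : list constraint) : CT_model M ->
  (forall v, ~ holds_b M v X) -> state_equiv X Y -> forall v, ~ holds_b M v Y.
Proof.
  intros HM Hn [_ D] v Hv. destruct (D M HM v Hv) as [v' [_ [_ Hh]]]. exact (Hn v' Hh).
Qed.

(* States reachable from the empty state are satisfiable and free of user constraints, so no
   rule fires on them; states reachable from [False] stay unsatisfiable. *)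
Lemma not_refutable_nil (P : program) (f0 : Fsym) : wf_program P -> ~ refutable P [].
Proof.
  intros Hwf [X [H1 H2]].
  set (M := herbrand (fun _ => True)). pose proof (herbrand_CT (fun _ => True)) as HM.
  assert (Hsat : exists v, holds_b M v X).
  { refine (proj1 (star_invariant P (fun Z => (exists v, holds_b M v Z) /\ user Z = [])
                    _ _ _ H1 _)).
    - intros S T HS [E|[R1 [R3 [E1 [_ Hr]]]]];
        [exact (state_equiv_satisfiable_no_user M S T HM HS E)|].
      exfalso. apply (raw_step_user P R1 R3 Hwf Hr).
      exact (proj2 (state_equiv_satisfiable_no_user M S R1 HM HS E1)).
    - split; [exists (fun _ => gnode f0 []); constructor|reflexivity]. }
  destruct Hsat as [v Hv].
  refine (star_invariant P (fun Z => forall v, ~ holds_b M v Z) _ _ _ H2 _ v Hv).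
  - intros S T HS [E|[R1 [R3 [E1 [_ Hr]]]]]; [exact (state_equiv_unsatisfiable M S T HM HS E)|].
    destruct Hr as [r [C [S0 [th [_ [-> [_ [_ [_ [_ [_ [Hsat _]]]]]]]]]]]].
    destruct (Hsat M HM) as [w Hw].
    exfalso. exact (state_equiv_unsatisfiable M S _ HM HS E1 w Hw).
  - intros w Hw. inversion Hw as [|? ? Hf]. destruct Hf.
Qed.

Definition user_atoms (w : var -> gterm) (S : list constraint) : list gatom :=
  flat_map (fun c => match c with CUser p ts => [(p, map (geval w) ts)] | _ => [] end) S.

Lemma user_atoms_user w (S : list constraint) : user_atoms w (user S) = user_atoms w S.
Proof. induction S as [|[] S IH]; simpl; rewrite ?IH; reflexivity. Qed.

Lemma ueq_user_atoms I (v w : var -> gterm) (U1 U2 : list constraint) :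
  ueq (herbrand I) v w U1 U2 -> Permutation (user_atoms v U1) (user_atoms w U2).
Proof.
  intros [U2' [Hp Hf]]. apply Permutation_trans with (user_atoms w U2'); [clear Hp|].
  - induction Hf as [|[] [] U1 U2'' Hcd _ IH]; try contradiction; [constructor|].
    destruct Hcd as [-> E]. rewrite !(map_ext _ _ (eval_herbrand I _)) in E.
    change (map (geval v) args = map (geval w) args0) in E.
    unfold user_atoms. simpl. fold (user_atoms v U1) (user_atoms w U2'').
    rewrite E. apply perm_skip, IH.
  - apply Permutation_flat_map, Permutation_sym, Hp.
Qed.

Lemma holds_herbrand_iff I w (S : list constraint) :
  Forall (holds_c (herbrand I) w) S <-> holds_b (herbrand I) w S /\ Forall I (user_atoms w S).
Proof.
  unfold holds_b. induction S as [|c S IH]; [split; [split|]; constructor|].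
  unfold user_atoms. simpl. fold (user_atoms w S). rewrite !Forall_cons_iff, Forall_app, IH.
  destruct c as [| | |p ts]; simpl; rewrite ?Forall_cons_iff, ?Forall_nil_iff; [tauto..|].
  rewrite (map_ext _ _ (eval_herbrand I w)). tauto.
Qed.

Lemma holds_builtin_closed (M : structure) I (w : var -> dom M) (u : var -> gterm)
  (c : constraint) :
  CT_model M -> cvars c = [] -> holds_builtin M w c <-> holds_builtin (herbrand I) u c.
Proof.
  intros HM Hc. destruct c as [| |t s|]; simpl; try tauto.
  apply app_eq_nil in Hc as [Ht Hs].
  rewrite (eval_closed M w u t Ht), (eval_closed M w u s Hs), !eval_herbrand.
  split; [apply gterm_interp_inj, HM|intros ->; reflexivity].
Qed.

Lemma holds_b_closed (M : structure) I (w : var -> dom M) (u : var -> gterm) (G : list constraint) :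
  CT_model M -> svars G = [] -> holds_b M w G <-> holds_b (herbrand I) u G.
Proof.
  intros HM. unfold holds_b, svars. induction G as [|c G IH]; intros Hs; [split; constructor|].
  simpl in Hs. apply app_eq_nil in Hs as [Hc Hs].
  rewrite !Forall_cons_iff, (holds_builtin_closed M I w u c HM Hc), (IH Hs). reflexivity.
Qed.

Lemma ceq_closed_user_atoms (M : structure) (w : var -> dom M) (u : var -> gterm)
  (G : list constraint) :
  svars G = [] ->
  Forall2 (ceq M w w) (user G) (map atom (user_atoms u G)) /\
  Forall2 (ceq M w w) (map atom (user_atoms u G)) (user G).
Proof.
  unfold svars. induction G as [|c G IH]; intros Hs; [split; constructor|].
  simpl in Hs. apply app_eq_nil in Hs as [Hc Hs]. destruct (IH Hs) as [IH1 IH2].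
  destruct c as [| | |p ts]; [exact (conj IH1 IH2)..|].
  assert (E : map (eval M w) ts = map (eval M w) (map of_gterm (map (geval u) ts))).
  { rewrite !map_map. apply map_ext_in. intros t Ht. rewrite eval_of_gterm.
    apply eval_closed, incl_l_nil. rewrite <- Hc. intros x Hx. apply in_flat_map. eauto. }
  split; constructor; auto; split; auto.
Qed.

Lemma ground_state_equiv_atoms I (G : list constraint) (u : var -> gterm) :
  svars G = [] -> holds_b (herbrand I) u G -> state_equiv G (map atom (user_atoms u G)).
Proof.
  intros Hs Hh. split; intros M HM w Hw; exists w; (split; [reflexivity|]); rewrite user_map_atom.
  - split; [|apply holds_b_map_atom]. exists (map atom (user_atoms u G)).
    split; [apply Permutation_refl|apply (ceq_closed_user_atoms M w u G Hs)].
  - split; [|apply (holds_b_closed M I w u G HM Hs), Hh]. exists (user G).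
    split; [apply Permutation_refl|apply (ceq_closed_user_atoms M w u G Hs)].
Qed.

Lemma ground_state_equiv_false I (G : list constraint) (u : var -> gterm) :
  svars G = [] -> ~ holds_b (herbrand I) u G -> state_equiv G [CFalse].
Proof.
  intros Hs Hn. split; intros M HM w Hw.
  - exfalso. apply Hn. apply (holds_b_closed M I w u G HM Hs). exact Hw.
  - inversion Hw as [|? ? Hf]. destruct Hf.
Qed.

Definition var_index (x : var) : nat := match x with PV n | GV n | LV n => n end.

Definition var_eq_dec (x y : var) : {x = y} + {x <> y}.
Proof. decide equality; apply PeanoNat.Nat.eq_dec. Defined.

(* Ground instance of a rule: variables shared with the head take their values from [v],
   and a local variable [PV n] of the body becomes the state variable [LV n]. *)
Definition rule_subst (r : rule) (v : var -> gterm) (x : var) : term :=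
  if in_dec var_eq_dec x (local_vars r) then Var (LV (var_index x)) else of_gterm (v x).

Definition head_atoms (r : rule) (v : var -> gterm) : list gatom :=
  user_atoms v (head_constraints r).

Definition fired (r : rule) (v : var -> gterm) : list constraint :=
  match kind r with
  | Simplification => ssubst (rule_subst r v) (body r)
  | Propagation => ssubst (rule_subst r v) (body r) ++ map atom (head_atoms r v)
  end.

Lemma head_var_not_local (r : rule) x : In x (head_vars r) -> ~ In x (local_vars r).
Proof.
  intros Hh Hl. apply filter_In in Hl as [_ Hl]. apply Bool.negb_true_iff in Hl.
  rewrite (proj2 (existsb_exists _ _)) in Hl; [discriminate|].
  exists x. split; [exact Hh|]. destruct x; apply PeanoNat.Nat.eqb_refl.
Qed.

Lemma local_var_in_body (r : rule) x : In x (local_vars r) -> In x (svars (body r)).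
Proof. intros Hl. apply filter_In in Hl. apply Hl. Qed.

Lemma rule_subst_nonlocal (r : rule) v x :
  ~ In x (local_vars r) -> rule_subst r v x = of_gterm (v x).
Proof. intros Hx. unfold rule_subst. destruct (in_dec var_eq_dec x (local_vars r)); tauto. Qed.

Lemma rule_subst_local (r : rule) v x :
  In x (local_vars r) -> rule_subst r v x = Var (LV (var_index x)).
Proof. intros Hx. unfold rule_subst. destruct (in_dec var_eq_dec x (local_vars r)); tauto. Qed.

Lemma head_instance (r : rule) v :
  ssubst (rule_subst r v) (head_constraints r) = map atom (head_atoms r v).
Proof.
  assert (Hvars : forall x, In x (head_vars r) -> rule_subst r v x = of_gterm (v x))
    by (intros x Hx; apply rule_subst_nonlocal, head_var_not_local, Hx).
  unfold head_atoms, head_vars, head_constraints in *. revert Hvars.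
  induction (Defs.head r) as [|[p ts] hs IH]; intros Hvars; [reflexivity|].
  unfold user_atoms, svars in *. simpl in *. f_equal.
  - unfold atom. simpl. f_equal. rewrite map_map. apply map_ext_in. intros t Ht.
    apply subst_of_gterm. intros x Hx. apply Hvars, in_or_app. left. apply in_flat_map. eauto.
  - apply IH. intros x Hx. apply Hvars, in_or_app. right. exact Hx.
Qed.

Lemma raw_step_fire (f0 : Fsym) (P : program) (r : rule) v : wf_rule r -> In r P ->
  (kind r = Simplification \/ ~ state_equiv (map atom (head_atoms r v)) (fired r v)) ->
  raw_step P (map atom (head_atoms r v)) (fired r v).
Proof.
  intros [_ [_ Hbody]] Hin Hk. exists r, (map atom (head_atoms r v)), [], (rule_subst r v).
  rewrite app_nil_r, svars_map_atom. split; [exact Hin|]. split; [reflexivity|].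
  split; [intros x; rewrite svars_map_atom; intros []|]. split.
  { intros x Hx. rewrite rule_subst_nonlocal by (apply head_var_not_local, Hx).
    rewrite tvars_of_gterm. intros y []. }
  split.
  { intros y Hy. exists (LV (var_index y)). split; [exact I|].
    split; [apply rule_subst_local, Hy|intros []]. }
  split.
  { intros y1 y2 H1 H2 E. rewrite (rule_subst_local _ _ _ H1), (rule_subst_local _ _ _ H2) in E.
    injection E as E. pose proof (Hbody y1 (local_var_in_body _ _ H1)) as P1.
    pose proof (Hbody y2 (local_var_in_body _ _ H2)) as P2.
    destruct y1, y2; simpl in *; try contradiction. subst. reflexivity. }
  split.
  { intros M _ w _. rewrite head_instance. exists (map atom (head_atoms r v)).
    split; [apply Permutation_refl|apply ceq_map_atom]. }
  split; [intros M _; exists (fun _ => ifun M f0 []); apply holds_b_map_atom|].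
  unfold fired in *. destruct (kind r); [rewrite app_nil_r; reflexivity|].
  destruct Hk as [Hk|Hk]; [discriminate|]. split; [reflexivity|exact Hk].
Qed.

Section Model.
Variable f0 : Fsym.
Variable P : program.
Hypothesis Hwf : wf_program P.
Hypothesis RR : range_restricted P.
Hypothesis GC : ground_confluent P.

Let wf_rule_in (r : rule) : In r P -> wf_rule r :=
  proj1 (Forall_forall (@wf_rule Fsym Psym) P) Hwf r.

Lemma star_fire (r : rule) v : In r P -> star P (map atom (head_atoms r v)) (fired r v).
Proof.
  intros Hin. apply rt_step.
  destruct (classic (state_equiv (map atom (head_atoms r v)) (fired r v))) as [E|E].
  - left. exact E.
  - right. exists (map atom (head_atoms r v)), (fired r v).
    split; [apply state_equiv_refl|]. split; [apply state_equiv_refl|].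
    apply (raw_step_fire f0); auto.
Qed.

Lemma fired_ground (r : rule) v : In r P -> ground (fired r v).
Proof.
  intros Hin. assert (Hhead : ground (map atom (head_atoms r v))).
  { exists (map atom (head_atoms r v)). split; [apply svars_map_atom|apply state_equiv_refl]. }
  destruct (classic (state_equiv (map atom (head_atoms r v)) (fired r v))) as [E|E].
  - exists (map atom (head_atoms r v)). split; [apply svars_map_atom|apply state_equiv_sym, E].
  - apply (RR _ _ Hhead). exists (map atom (head_atoms r v)), (fired r v).
    split; [apply state_equiv_refl|]. split; [apply state_equiv_refl|].
    apply (raw_step_fire f0); auto.
Qed.

Lemma star_fire_atoms I (r : rule) v G u : In r P -> state_equiv (fired r v) G -> svars G = [] ->
  holds_b (herbrand I) u G -> star P (map atom (head_atoms r v)) (map atom (user_atoms u G)).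
Proof.
  intros Hin EG HsG HG. apply rt_trans with (fired r v); [apply star_fire, Hin|].
  apply rt_trans with G; apply rt_step; left; [exact EG|].
  exact (ground_state_equiv_atoms I G u HsG HG).
Qed.

Definition consistent_interp (I : gatom -> Prop) : Prop :=
  forall l, Forall I l -> ~ refutable P l.

Definition maximal_interp (I : gatom -> Prop) : Prop :=
  forall a, ~ I a -> exists l, Forall (fun b => I b \/ b = a) l /\ refutable P l.

Lemma refutable_replace (I : gatom -> Prop) a w :
  Forall I w -> (forall l, refutable P (a :: l) -> refutable P (w ++ l)) ->
  forall l, Forall (fun b => I b \/ b = a) l -> refutable P l ->
  exists l', Forall I l' /\ refutable P l'.
Proof.
  intros Hw Hrep l Hl Hr. rewrite <- (app_nil_r l) in Hr.
  assert (Hk : Forall I []) by constructor. revert Hr Hk. generalize (@nil gatom) as k.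
  induction Hl as [|b l [Ib| ->] _ IH]; intros k Hr Hk; simpl in Hr.
  - eauto.
  - apply (IH (b :: k)); [|constructor; assumption].
    apply (refutable_perm P (b :: l ++ k)); [apply Permutation_middle|exact Hr].
  - apply (IH (w ++ k)); [|apply Forall_app; split; assumption].
    apply (refutable_perm P (w ++ l ++ k)); [apply Permutation_app_swap_app|]. apply Hrep, Hr.
Qed.

(* An atom [a] of [u] outside [I] is refuted together with atoms of [I]; replacing its
   occurrences by [w] would refute atoms of [I] alone. *)
Lemma maximal_closed (I : gatom -> Prop) w u : consistent_interp I -> maximal_interp I ->
  Forall I w -> (forall l, refutable P (u ++ l) -> refutable P (w ++ l)) -> Forall I u.
Proof.
  intros Hcons Hmax Hw Hrep. apply Forall_forall. intros a Ha. apply NNPP. intros Hna.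
  destruct (Hmax a Hna) as [l [Hl Hr]].
  destruct (refutable_replace I a w Hw) with l as [l' [Hl' Hr']];
    [|exact Hl|exact Hr|exact (Hcons l' Hl' Hr')].
  intros l0 Hr0. apply Hrep. apply in_split in Ha as [u1 [u2 ->]].
  apply (refutable_perm P ((a :: l0) ++ u1 ++ u2)); [|apply refutable_app, Hr0].
  rewrite <- app_assoc. simpl. apply Permutation_sym.
  apply Permutation_trans with (a :: u1 ++ u2 ++ l0); [apply Permutation_sym, Permutation_middle|].
  apply perm_skip. rewrite app_assoc. apply Permutation_app_comm.
Qed.

Lemma exists_maximal_interp : exists I, consistent_interp I /\ maximal_interp I.
Proof.
  destruct (zorn_chain_union gatom consistent_interp) as [I [Hcons Hmax]].
  - intros F Fcons Hchain l Hl.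
    destruct (Forall_chain_union gatom F l Hchain Hl) as [->|[X [FX HX]]].
    + exact (not_refutable_nil P f0 Hwf).
    + exact (Fcons X FX l HX).
  - exists I. split; [exact Hcons|]. intros a Ha. apply NNPP. intros Hn. apply Ha.
    apply (Hmax (fun b => I b \/ b = a)); [intros t Ht; left; exact Ht| |right; reflexivity].
    intros l Hl Hr. apply Hn. exists l. split; assumption.
Qed.

Lemma rule_forward I (r : rule) v : consistent_interp I -> maximal_interp I -> In r P ->
  Forall I (head_atoms r v) ->
  exists v', (forall x, ~ In x (local_vars r) -> v' x = v x) /\
    Forall (holds_c (herbrand I) v') (body r).
Proof.
  intros Hcons Hmax Hin Hhead.
  destruct (fired_ground r v Hin) as [G [HsG EG]].
  set (u0 := fun _ : var => gnode f0 []).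
  assert (HG : holds_b (herbrand I) u0 G).
  { apply NNPP. intros Hn. apply (Hcons _ Hhead). exists [CFalse]. split; [|apply rt_refl].
    apply rt_trans with (fired r v); [apply star_fire, Hin|].
    apply rt_trans with G; apply rt_step; left;
      [exact EG|exact (ground_state_equiv_false I G u0 HsG Hn)]. }
  assert (Hgu : Forall I (user_atoms u0 G)).
  { apply (maximal_closed I (head_atoms r v)); [exact Hcons|exact Hmax|exact Hhead|].
    intros l. apply refutable_of_star, (star_fire_atoms I r v G u0 Hin EG HsG HG). }
  destruct (proj2 EG (herbrand I) (herbrand_CT I) u0 HG) as [v'' [_ [Hu Hh]]].
  assert (Hfired : Forall (holds_c (herbrand I) v'') (fired r v)).
  { apply holds_herbrand_iff. split; [exact Hh|]. rewrite <- user_atoms_user.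
    apply (Permutation_Forall (ueq_user_atoms I u0 v'' _ _ Hu)).
    rewrite user_atoms_user. exact Hgu. }
  exists (fun x => eval (herbrand I) v'' (rule_subst r v x)). split.
  - intros x Hx. rewrite rule_subst_nonlocal, eval_herbrand by exact Hx. apply geval_of_gterm.
  - apply Forall_forall. intros c Hc. apply holds_c_csubst.
    rewrite Forall_forall in Hfired. apply Hfired.
    unfold fired. destruct (kind r); [|apply in_or_app; left]; apply in_map, Hc.
Qed.

Lemma rule_backward I (r : rule) v v' : consistent_interp I -> maximal_interp I -> In r P ->
  kind r = Simplification -> (forall x, ~ In x (local_vars r) -> v' x = v x) ->
  Forall (holds_c (herbrand I) v') (body r) -> Forall I (head_atoms r v).
Proof.
  intros Hcons Hmax Hin Ek Hagree Hbody.
  destruct (wf_rule_in r Hin) as [_ [_ Hprog]].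
  destruct (fired_ground r v Hin) as [G [HsG EG]].
  set (vR := fun z : var => match z with LV n => v' (PV n) | _ => gnode f0 [] end).
  assert (Hfired : Forall (holds_c (herbrand I) vR) (fired r v)).
  { unfold fired. rewrite Ek. apply Forall_map, Forall_forall. intros c Hc.
    apply holds_c_csubst. rewrite Forall_forall in Hbody.
    apply (holds_c_ext _ v'); [|apply Hbody, Hc].
    intros x Hx. assert (Hxb : In x (svars (body r))) by (apply in_flat_map; eauto).
    destruct (in_dec var_eq_dec x (local_vars r)) as [Hl|Hl].
    - rewrite rule_subst_local by exact Hl. specialize (Hprog x Hxb).
      destruct x; [reflexivity|contradiction..].
    - rewrite rule_subst_nonlocal, eval_herbrand, geval_of_gterm by exact Hl. apply Hagree, Hl. }
  apply holds_herbrand_iff in Hfired as [Hh Hu].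
  destruct (proj1 EG _ (herbrand_CT I) vR Hh) as [v3 [_ [Hueq HG]]].
  assert (Hgu : Forall I (user_atoms v3 G)).
  { rewrite <- user_atoms_user. apply (Permutation_Forall (ueq_user_atoms I vR v3 _ _ Hueq)).
    rewrite user_atoms_user. exact Hu. }
  apply (maximal_closed I (user_atoms v3 G)); [exact Hcons|exact Hmax|exact Hgu|].
  intros l. apply refutable_star; [exact GC|]. exact (star_fire_atoms I r v G v3 Hin EG HsG HG).
Qed.

Lemma herbrand_rule_holds I (r : rule) : consistent_interp I -> maximal_interp I -> In r P ->
  rule_holds (herbrand I) r.
Proof.
  intros Hcons Hmax Hin v. cbv zeta.
  assert (Hhead : Forall (holds_c (herbrand I) v) (head_constraints r) <->
                 Forall I (head_atoms r v)).
  { rewrite holds_herbrand_iff. split; [tauto|]. intros Hh. split; [|exact Hh].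
    apply Forall_map, Forall_forall. intros. constructor. }
  destruct (kind r) eqn:Ek; rewrite Hhead.
  - split; [apply rule_forward; assumption|]. intros [v' [Hagree Hbody]].
    exact (rule_backward I r v v' Hcons Hmax Hin Ek Hagree Hbody).
  - apply rule_forward; assumption.
Qed.

Lemma program_consistent : consistent P.
Proof.
  destruct exists_maximal_interp as [I [Hcons Hmax]]. exists (herbrand I).
  split; [apply herbrand_CT|].
  apply Forall_forall. intros r Hin. apply herbrand_rule_holds; assumption.
Qed.

End Model.

End Consistency.

Theorem theorem1 (Fsym Psym : Type) (HF : inhabited Fsym)
  (P : program Fsym Psym) :
  wf_program P -> range_restricted P -> ground_confluent P -> consistent P.
Proof.
  intros Hwf RR GC. destruct HF as [f0]. exact (program_consistent Fsym Psym f0 P Hwf RR GC).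
Qed.
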